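(* Let $L\ge1$ and $\alpha\in(\alpha_{L+1},\alpha_L)$, and let $c_1,\dots,c_L>0$ and $d_0(L)>0$ be the constants from the affine medium-size system. If $(l_0,\dots,l_{L+2})\in\mathbb{R}^{L+3}$ satisfies $l_0=0$, $l_{L+2}\ge0$, $\sum_{j=1}^{L+1}l_j=1$, and $d_j:=-\alpha l_{j-1}+l_j-l_{j+1}+\alpha l_{j+2}$ for $j\in\{1,\dots,L\}$, then $$d_0\ge d_0(L)-\sum_{k=1}^Lc_{L+1-k}d_k,\qquad\text{where } d_0:=-l_1+\alpha l_2.$$
   Context: Define $\alpha_1:=+\infty$ and, for $L\ge2$, $\alpha_L:=\dfrac{1}{1+2\cos(\frac{2\pi}{L+2})}$. For real $d_1,\dots,d_L$, the system $AS(d_1,\dots,d_L)$ on $(l_0,\dots,l_{L+2})$ is: $l_0=l_{L+2}=0$; $d_j=-\alpha l_{j-1}+l_j-l_{j+1}+\alpha l_{j+2}$ for $j\in\{1,\dots,L\}$; $\sum_{j=1}^{L+1}l_j=1$. It is a fact (proved in the paper) that there are constants $c_1,\dots,c_L>0$ depending only on $\alpha,L$ such that for all $d_1,\dots,d_L$ this system has a unique solution with $-l_1+\alpha l_2=d_0(L)-\sum_{k=1}^Lc_{L+1-k}d_k$ and $-\alpha l_L+l_{L+1}=-d_0(L)-\sum_{k=1}^Lc_kd_k$; here $d_0(L)>0$ is the value of $-l_1+\alpha l_2$ at the solution of $AS(0,\dots,0)$. *)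

From Stdlib Require Import Reals Lra Lia.
Open Scope R_scope.

Fixpoint sum1 (n : nat) (f : nat -> R) : R :=
  match n with
  | O => 0
  | S k => sum1 k f + f (S k)
  end.

(* alpha_L for L >= 2 ; alpha_1 = +infinity is handled in [alpha_interval]. *)
Definition alphaL (L : nat) : R := 1 / (1 + 2 * cos (2 * PI / INR (L + 2))).

Definition alpha_interval (L : nat) (a : R) : Prop :=
  alphaL (L + 1) < a /\ ((1 < L)%nat -> a < alphaL L).

Definition dj (a : R) (l : nat -> R) (j : nat) : R :=
  - a * l (j - 1)%nat + l j - l (j + 1)%nat + a * l (j + 2)%nat.

Definition AS_sol (a : R) (L : nat) (d : nat -> R) (l : nat -> R) : Prop :=
  l 0%nat = 0 /\ l (L + 2)%nat = 0 /\
  (forall j, (1 <= j <= L)%nat -> d j = dj a l j) /\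
  sum1 (L + 1) l = 1.

(* c_1..c_L and d_0(L) are "the constants of the affine medium-size system":
   for every d, AS(d) has a unique solution (on indices 0..L+2), and at it
   -l_1 + a l_2 = d0L - sum_k c_{L+1-k} d_k and
   -a l_L + l_{L+1} = -d0L - sum_k c_k d_k. *)
Definition AS_constants (a : R) (L : nat) (c : nat -> R) (d0L : R) : Prop :=
  forall d : nat -> R,
    (exists l, AS_sol a L d l) /\
    (forall l l', AS_sol a L d l -> AS_sol a L d l' ->
       forall i, (i <= L + 2)%nat -> l i = l' i) /\
    (forall l, AS_sol a L d l ->
       - l 1%nat + a * l 2%nat = d0L - sum1 L (fun k => c (L + 1 - k)%nat * d k) /\
       - a * l L + l (L + 1)%nat = - d0L - sum1 L (fun k => c k * d k)).

(* Let t := l_{L+2} >= 0 and let l' be l with its last entry replaced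
   by 0.  Then l' satisfies the boundary conditions and the normalisation of
   the affine system, so it is the solution of AS(d') with d'_j := d_j(l').
   The data d' coincide with d_j(l) except at j = L, where the term alpha l_{L+2}
   is lost: d'_L = d_L - alpha t.  The formula for -l'_1 + alpha l'_2 supplied by
   the constants of the system therefore gives
       d_0 = d_0(L) - sum_k c_{L+1-k} d_k + c_1 alpha t,
   and the extra term is nonnegative because c_1 > 0, t >= 0 and alpha > 0
   (alpha exceeds alpha_{L+1} > 0). *)

From Stdlib Require Import Reals Lra Lia.
Open Scope R_scope.

Lemma sum1_ext (n : nat) (f g : nat -> R) :
  (forall k, (1 <= k <= n)%nat -> f k = g k) -> sum1 n f = sum1 n g.
Proof.
  induction n as [|n IH]; intros Hfg; simpl; [reflexivity|].
  rewrite IH by (intros k Hk; apply Hfg; lia).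
  rewrite (Hfg (S n)) by lia. reflexivity.
Qed.

Lemma sum1_change_last (n : nat) (f g : nat -> R) :
  (1 <= n)%nat -> (forall k, (1 <= k < n)%nat -> f k = g k) ->
  sum1 n g = sum1 n f + (g n - f n).
Proof.
  intros Hn Hfg. destruct n as [|m]; [lia|]. simpl.
  rewrite (sum1_ext m f g) by (intros k Hk; apply Hfg; lia). ring.
Qed.

(* alpha_n > 0 for n >= 2: then 2 pi / (n + 2) <= pi / 2, so the cosine is
   nonnegative and the denominator 1 + 2 cos(...) is at least 1. *)
Lemma alphaL_pos (n : nat) : (2 <= n)%nat -> 0 < alphaL n.
Proof.
  intros Hn. unfold alphaL. pose proof PI_RGT_0 as Hpi.
  assert (H4 : 4 <= INR (n + 2)).
  { replace 4 with (INR 4) by (simpl; lra). apply le_INR. lia. }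
  assert (Hcos : 0 <= cos (2 * PI / INR (n + 2))).
  { apply cos_ge_0.
    - assert (0 < 2 * PI / INR (n + 2)) by (apply Rdiv_lt_0_compat; lra). lra.
    - apply (Rmult_le_reg_r (INR (n + 2))); [lra|].
      unfold Rdiv. rewrite Rmult_assoc, Rinv_l by lra. nra. }
  apply Rdiv_lt_0_compat; lra.
Qed.

Lemma alpha_interval_pos (L : nat) (a : R) :
  (1 <= L)%nat -> alpha_interval L a -> 0 < a.
Proof.
  intros HL [Hlow _]. pose proof (alphaL_pos (L + 1) ltac:(lia)). lra.
Qed.

Definition truncate (l : nat -> R) (N : nat) : nat -> R :=
  fun i => if Nat.eqb i N then 0 else l i.

Lemma truncate_at (l : nat -> R) (N : nat) : truncate l N N = 0.
Proof. unfold truncate. now rewrite Nat.eqb_refl. Qed.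

Lemma truncate_other (l : nat -> R) (N i : nat) : i <> N -> truncate l N i = l i.
Proof.
  intros Hi. unfold truncate. now destruct (Nat.eqb_spec i N).
Qed.

Lemma truncate_AS_sol (a : R) (L : nat) (l : nat -> R) :
  l 0%nat = 0 -> sum1 (L + 1) l = 1 ->
  AS_sol a L (dj a (truncate l (L + 2))) (truncate l (L + 2)).
Proof.
  intros Hl0 Hs. repeat split.
  - rewrite truncate_other by lia. exact Hl0.
  - apply truncate_at.
  - rewrite <- Hs. apply sum1_ext. intros k Hk. apply truncate_other. lia.
Qed.

Lemma dj_truncate_below (a : R) (L : nat) (l : nat -> R) (j : nat) :
  (1 <= j < L)%nat -> dj a (truncate l (L + 2)) j = dj a l j.
Proof.
  intros Hj. unfold dj. rewrite !truncate_other by lia. reflexivity.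
Qed.

Lemma dj_truncate_last (a : R) (L : nat) (l : nat -> R) :
  dj a (truncate l (L + 2)) L = dj a l L - a * l (L + 2)%nat.
Proof.
  unfold dj. rewrite truncate_at, !truncate_other by lia. ring.
Qed.

Lemma weighted_data_truncate (a : R) (L : nat) (c l : nat -> R) :
  (1 <= L)%nat ->
  sum1 L (fun k => c (L + 1 - k)%nat * dj a (truncate l (L + 2)) k)
  = sum1 L (fun k => c (L + 1 - k)%nat * dj a l k) - c 1%nat * a * l (L + 2)%nat.
Proof.
  intros HL.
  rewrite (sum1_change_last L (fun k => c (L + 1 - k)%nat * dj a l k)); [| exact HL |].
  2: { intros k Hk. now rewrite dj_truncate_below. }
  rewrite dj_truncate_last. replace (L + 1 - L)%nat with 1%nat by lia. ring.
Qed.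

Theorem mainTheorem10 (L : nat) (a : R) (c : nat -> R) (d0L : R) :
  (1 <= L)%nat ->
  alpha_interval L a ->
  (forall k, (1 <= k <= L)%nat -> 0 < c k) ->
  0 < d0L ->
  AS_constants a L c d0L ->
  forall l : nat -> R,
    l 0%nat = 0 ->
    0 <= l (L + 2)%nat ->
    sum1 (L + 1) l = 1 ->
    - l 1%nat + a * l 2%nat >= d0L - sum1 L (fun k => c (L + 1 - k)%nat * dj a l k).
Proof.
  intros HL Hint Hc _ HAS l Hl0 Ht Hs.
  pose proof (alpha_interval_pos L a HL Hint) as Ha.
  assert (Hc1 : 0 < c 1%nat) by (apply Hc; lia).
  destruct (HAS (dj a (truncate l (L + 2)))) as [_ [_ Hformula]].
  destruct (Hformula _ (truncate_AS_sol a L l Hl0 Hs)) as [Hd0 _].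
  rewrite !truncate_other, weighted_data_truncate in Hd0 by lia.
  rewrite Hd0.
  assert (0 <= c 1%nat * a * l (L + 2)%nat)
    by (apply Rmult_le_pos; [apply Rmult_le_pos|]; lra).
  lra.
Qed.
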